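(* The category $\mathcal{Q}$ is equivalent to the category $\mathrm{SRings}_{\le 1}^{\mathrm{good}}$.
   Context: Rings are commutative and unital. A quasi-ideal in a ring $C$ is a pair $(I,d)$, where $I$ is a $C$-module and $d:I\to C$ is a $C$-linear map with $d(x)\cdot y=d(y)\cdot x$ for all $x,y\in I$. $\mathcal{Q}$ is the category of triples $(C,I,d)$ with $C$ a ring and $(I,d)$ a quasi-ideal in $C$. Morphisms are pairs (ring homomorphism, compatible semilinear map commuting with $d$). A 1-truncated simplicial ring is a collection $(A_0,A_1,\partial_0,\partial_1,s)$ of rings $A_0,A_1$ and ring homomorphisms $\partial_0,\partial_1:A_1\to A_0$, $s:A_0\to A_1$ with $\partial_0 s=\partial_1 s=\mathrm{id}$. $\mathrm{SRings}_{\le 1}^{\mathrm{good}}$ is the full subcategory of the category of 1-truncated simplicial rings formed by those with $(\ker\partial_0)\cdot(\ker\partial_1)=0$. *)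

From HB Require Import structures.
From mathcomp Require Import all_boot all_order all_algebra.
Set Implicit Arguments.
Set Warnings "-notation-overridden,-ambiguous-paths". Unset Strict Implicit. Unset Printing Implicit Defensive.
Import GRing.Theory.
Local Open Scope ring_scope.

(* Morphisms come with an equality relation [heq] (extensional equality of the
   underlying maps). *)
Record Cat := {
  Ob : Type;
  Hom : Ob -> Ob -> Type;
  heq : forall a b, Hom a b -> Hom a b -> Prop;
  cid : forall a, Hom a a;
  ccomp : forall a b c, Hom b c -> Hom a b -> Hom a c   (* ccomp g f = g o f *)
}.
Arguments Hom : clear implicits.
Arguments heq {c a b} : rename.
Arguments cid : clear implicits.
Arguments ccomp {c a b c0} : rename.

Record Functor (C D : Cat) := {
  fob : Ob C -> Ob D;
  fhom : forall a b, Hom C a b -> Hom D (fob a) (fob b);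
  fresp : forall a b (f g : Hom C a b), heq f g -> heq (fhom f) (fhom g);
  fid : forall a, heq (fhom (cid C a)) (cid D (fob a));
  fcomp : forall a b c (g : Hom C b c) (f : Hom C a b),
      heq (fhom (ccomp g f)) (ccomp (fhom g) (fhom f))
}.

Definition nat_iso (C D : Cat) (F0 G0 : Ob C -> Ob D)
  (F1 : forall a b, Hom C a b -> Hom D (F0 a) (F0 b))
  (G1 : forall a b, Hom C a b -> Hom D (G0 a) (G0 b)) : Prop :=
  exists (alpha : forall a, Hom D (F0 a) (G0 a))
         (beta : forall a, Hom D (G0 a) (F0 a)),
    (forall a, heq (ccomp (beta a) (alpha a)) (cid D (F0 a))) /\
    (forall a, heq (ccomp (alpha a) (beta a)) (cid D (G0 a))) /\
    (forall a b (f : Hom C a b),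
        heq (ccomp (G1 a b f) (alpha a)) (ccomp (alpha b) (F1 a b f))).

Definition cat_equiv (C D : Cat) : Prop :=
  exists (F : Functor C D) (G : Functor D C),
    @nat_iso C C (fun a => a) (fun a => fob G (fob F a))
            (fun a b f => f) (fun a b f => fhom G (fhom F f)) /\
    @nat_iso D D (fun a => fob F (fob G a)) (fun a => a)
            (fun a b f => fhom F (fhom G f)) (fun a b f => f).

Record QObj := {
  qC : comPzRingType;
  qI : lmodType qC;
  qd : qI -> qC;
  qd_linear : forall (c : qC) (x y : qI), qd (c *: x + y) = c * qd x + qd y;
  qd_sym : forall x y : qI, qd x *: y = qd y *: x
}.
Arguments qd : clear implicits.

Record QHom (X Y : QObj) := {
  qf : {rmorphism qC X -> qC Y};
  qg : qI X -> qI Y;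
  qg_add : forall x y, qg (x + y) = qg x + qg y;
  qg_semilin : forall (c : qC X) (x : qI X), qg (c *: x) = qf c *: qg x;
  qg_d : forall x, qd Y (qg x) = qf (qd X x)
}.

Definition QHom_eq X Y (h k : QHom X Y) : Prop :=
  (forall c, qf h c = qf k c) /\ (forall x, qg h x = qg k x).

Definition QHom_id (X : QObj) : QHom X X.
Proof.
refine (@Build_QHom X X idfun idfun _ _ _); by [].
Defined.

Definition QHom_comp X Y Z (h : QHom Y Z) (k : QHom X Y) : QHom X Z.
Proof.
refine (@Build_QHom X Z (qf h \o qf k) (qg h \o qg k) _ _ _) => /=.
- by move=> x y; rewrite qg_add qg_add.
- by move=> c x; rewrite qg_semilin qg_semilin.
- by move=> x; rewrite qg_d qg_d.
Defined.

Definition QCat : Cat :=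
  {| Ob := QObj; Hom := QHom; heq := QHom_eq; cid := QHom_id;
     ccomp := QHom_comp |}.

Record SObj := {
  sA0 : comPzRingType;
  sA1 : comPzRingType;
  sd0 : {rmorphism sA1 -> sA0};
  sd1 : {rmorphism sA1 -> sA0};
  ss : {rmorphism sA0 -> sA1};
  sd0s : forall a, sd0 (ss a) = a;
  sd1s : forall a, sd1 (ss a) = a;
  (* goodness: (ker d0) * (ker d1) = 0, i.e. the ideal product vanishes,
     equivalently x * y = 0 for all x in ker d0 and y in ker d1 *)
  sgood : forall x y : sA1, sd0 x = 0 -> sd1 y = 0 -> x * y = 0
}.

Record SHom (X Y : SObj) := {
  sh0 : {rmorphism sA0 X -> sA0 Y};
  sh1 : {rmorphism sA1 X -> sA1 Y};
  sh_d0 : forall x, sd0 Y (sh1 x) = sh0 (sd0 X x);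
  sh_d1 : forall x, sd1 Y (sh1 x) = sh0 (sd1 X x);
  sh_s : forall a, ss Y (sh0 a) = sh1 (ss X a)
}.

Definition SHom_eq X Y (h k : SHom X Y) : Prop :=
  (forall a, sh0 h a = sh0 k a) /\ (forall x, sh1 h x = sh1 k x).

Definition SHom_id (X : SObj) : SHom X X.
Proof.
refine (@Build_SHom X X idfun idfun _ _ _); by [].
Defined.

Definition SHom_comp X Y Z (h : SHom Y Z) (k : SHom X Y) : SHom X Z.
Proof.
refine (@Build_SHom X Z (sh0 h \o sh0 k) (sh1 h \o sh1 k) _ _ _) => /=.
- by move=> x; rewrite !sh_d0.
- by move=> x; rewrite !sh_d1.
- by move=> a; rewrite !sh_s.
Defined.

Definition SCat : Cat :=
  {| Ob := SObj; Hom := SHom; heq := SHom_eq; cid := SHom_id;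
     ccomp := SHom_comp |}.

From HB Require Import structures.
From mathcomp Require Import all_boot all_order all_algebra.
Set Implicit Arguments. Unset Strict Implicit. Unset Printing Implicit Defensive.
Import GRing.Theory.
Local Open Scope ring_scope.

(* A quasi-ideal d : I -> C gives the ring C (+) I with product
   (a, x)(b, y) = (ab, ay + bx + d(x)y), faces d0 (a, x) = a, d1 (a, x) = a + d(x)
   and degeneracy s a = (a, 0); the symmetry d(x)y = d(y)x is exactly what makes
   it good.  Conversely, a good 1-truncated simplicial ring gives the quasi-ideal
   d1 : ker d0 -> A0, with A0 acting through s.  Goodness says y x = s(d1 y) x for
   x in ker d0; this yields the symmetry of d1 on ker d0 and the multiplicativity
   of the splitting A0 (+) ker d0 ~= A1, (c, k) |-> s c + k.  Going the other way
   round, ker d0 of C (+) I is I, embedded as x |-> (0, x). *)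

HB.instance Definition _ (X : QObj) :=
  GRing.isLinear.Build (qC X) (qI X) (qC X) *%R (qd X) (@qd_linear X).

Lemma qg_is_zmod_morphism X Y (h : QHom X Y) : zmod_morphism (qg h).
Proof. by move=> x y; apply/eqP; rewrite eq_sym subr_eq -qg_add subrK. Qed.

HB.instance Definition _ X Y (h : QHom X Y) :=
  GRing.isZmodMorphism.Build _ _ (qg h) (qg_is_zmod_morphism h).

Definition qext (X : QObj) := (qC X * qI X)%type.
HB.instance Definition _ (X : QObj) :=
  GRing.Zmodule.copy (qext X) (qC X * qI X)%type.

Section QuasiIdealExtension.
Variable X : QObj.
Implicit Types u v : qext X.

Definition qext_mul u v : qext X :=
  (u.1 * v.1, u.1 *: v.2 + v.1 *: u.2 + qd X u.2 *: v.2).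
Definition qext_one : qext X := (1, 0).

Lemma qext_mulA : associative qext_mul.
Proof.
move=> [a x] [b y] [c z]; congr (_, _); first exact: mulrA.
rewrite /= !linearD !linearZ /= !scalerA !scalerDl !addrA.
rewrite [b * a]mulrC [c * a]mulrC [qd X y * a]mulrC [c * qd X x]mulrC.
by rewrite [qd X y * qd X x]mulrC [RHS](ACl (1*2*5*3*6*4*7)).
Qed.

Lemma qext_mulC : commutative qext_mul.
Proof.
move=> [a x] [b y]; congr (_, _); first exact: mulrC.
by rewrite /= qd_sym (addrC (a *: y)).
Qed.

Lemma qext_mul1 : left_id qext_one qext_mul.
Proof.
move=> [a x]; congr (_, _); first exact: mul1r.
by rewrite /= scale1r scaler0 raddf0 scale0r !addr0.
Qed.

Lemma qext_mulDl : left_distributive qext_mul +%R.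
Proof.
move=> [a x] [b y] [c z]; congr (_, _); first exact: mulrDl.
rewrite /= scalerDr linearD /= !scalerDl !addrA.
by rewrite [LHS](ACl (1*3*5*2*4*6)).
Qed.

End QuasiIdealExtension.

HB.instance Definition _ (X : QObj) := GRing.Zmodule_isComPzRing.Build (qext X)
  (@qext_mulA X) (@qext_mulC X) (@qext_mul1 X) (@qext_mulDl X).

Section QuasiIdealFaces.
Variable X : QObj.
Implicit Types u : qext X.

Definition qext_d0 u : qC X := u.1.
Definition qext_d1 u : qC X := u.1 + qd X u.2.
Definition qext_s (c : qC X) : qext X := (c, 0).

Lemma qext_d0_is_zmod_morphism : zmod_morphism qext_d0. Proof. by []. Qed.
Lemma qext_d0_is_monoid_morphism : monoid_morphism qext_d0. Proof. by []. Qed.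

Lemma qext_d1_is_zmod_morphism : zmod_morphism qext_d1.
Proof. by move=> [a x] [b y]; rewrite /qext_d1 /= raddfB addrACA opprD. Qed.

Lemma qext_d1_is_monoid_morphism : monoid_morphism qext_d1.
Proof.
split=> [|[a x] [b y]]; first by rewrite /qext_d1 /= raddf0 addr0.
rewrite /qext_d1 /= !linearD !linearZ /= mulrDl !mulrDr !addrA.
by rewrite (mulrC (qd X x) b).
Qed.

Lemma qext_s_is_zmod_morphism : zmod_morphism qext_s.
Proof. by move=> a b; rewrite /qext_s; congr (_, _); rewrite /= subrr. Qed.

Lemma qext_s_is_monoid_morphism : monoid_morphism qext_s.
Proof.
split=> // a b; rewrite /qext_s; congr (_, _).
by rewrite /= !scaler0 !addr0.
Qed.

End QuasiIdealFaces.

HB.instance Definition _ X := GRing.isZmodMorphism.Build _ _ (@qext_d0 X)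
  (@qext_d0_is_zmod_morphism X).
HB.instance Definition _ X := GRing.isMonoidMorphism.Build _ _ (@qext_d0 X)
  (@qext_d0_is_monoid_morphism X).
HB.instance Definition _ X := GRing.isZmodMorphism.Build _ _ (@qext_d1 X)
  (@qext_d1_is_zmod_morphism X).
HB.instance Definition _ X := GRing.isMonoidMorphism.Build _ _ (@qext_d1 X)
  (@qext_d1_is_monoid_morphism X).
HB.instance Definition _ X := GRing.isZmodMorphism.Build _ _ (@qext_s X)
  (@qext_s_is_zmod_morphism X).
HB.instance Definition _ X := GRing.isMonoidMorphism.Build _ _ (@qext_s X)
  (@qext_s_is_monoid_morphism X).

Lemma qext_d0_s X (c : qC X) : qext_d0 (qext_s c) = c. Proof. by []. Qed.

Lemma qext_d1_s X (c : qC X) : qext_d1 (qext_s c) = c.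
Proof. by rewrite /qext_d1 raddf0 addr0. Qed.

Lemma qext_mul_ker X (u v : qext X) : qext_d0 u = 0 -> qext_d1 v = 0 -> u * v = 0.
Proof.
case: u v => [a x] [b y]; rewrite /qext_d0 /qext_d1 /= => -> /eqP.
rewrite addr_eq0 => /eqP ->; congr (_, _); first exact: mul0r.
by rewrite /= scale0r add0r scaleNr qd_sym addNr.
Qed.

Definition sring_of_qideal (X : QObj) : SObj :=
  @Build_SObj (qC X) (qext X) (GRing.RMorphism.clone _ _ (@qext_d0 X) _)
    (GRing.RMorphism.clone _ _ (@qext_d1 X) _)
    (GRing.RMorphism.clone _ _ (@qext_s X) _)
    (@qext_d0_s X) (@qext_d1_s X) (@qext_mul_ker X).

Section QuasiIdealHom.
Variables (X Y : QObj) (h : QHom X Y).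
Implicit Types u : qext X.

Definition qext_map (u : qext X) : qext Y := (qf h u.1, qg h u.2).

Lemma qext_map_is_zmod_morphism : zmod_morphism qext_map.
Proof. by move=> [a x] [b y]; congr (_, _); rewrite /= raddfB. Qed.

Lemma qext_map_is_monoid_morphism : monoid_morphism qext_map.
Proof.
split=> [|[a x] [b y]]; first by congr (_, _); rewrite /= ?rmorph1 ?raddf0.
congr (_, _); first exact: rmorphM.
by rewrite /= !qg_add !qg_semilin qg_d.
Qed.

End QuasiIdealHom.

HB.instance Definition _ X Y h := GRing.isZmodMorphism.Build _ _ (@qext_map X Y h)
  (qext_map_is_zmod_morphism h).
HB.instance Definition _ X Y h := GRing.isMonoidMorphism.Build _ _ (@qext_map X Y h)
  (qext_map_is_monoid_morphism h).

Lemma qext_map_d1 X Y (h : QHom X Y) u : qext_d1 (qext_map h u) = qf h (qext_d1 u).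
Proof. by rewrite /qext_d1 /= qg_d rmorphD. Qed.

Lemma qext_map_s X Y (h : QHom X Y) c : qext_s (qf h c) = qext_map h (qext_s c).
Proof. by rewrite /qext_map /= raddf0. Qed.

Definition sring_of_qideal_hom X Y (h : QHom X Y) :
    SHom (sring_of_qideal X) (sring_of_qideal Y) :=
  @Build_SHom (sring_of_qideal X) (sring_of_qideal Y) (qf h)
    (GRing.RMorphism.clone _ _ (qext_map h) _)
    (fun _ => erefl) (qext_map_d1 h) (qext_map_s h).

Definition sring_of_qideal_functor : Functor QCat SCat.
Proof.
refine (@Build_Functor QCat SCat sring_of_qideal sring_of_qideal_hom _ _ _).
- by move=> X Y f g [e1 e2]; split=> // -[c x]; rewrite /= /qext_map /= e1 e2.
- by move=> X; split=> [c|[c x]].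
- by move=> X Y Z g f; split=> [c|[c x]].
Defined.

Definition ker_d0 (X : SObj) : {pred sA1 X} := [pred x | sd0 X x == 0].
Arguments ker_d0 : clear implicits.

Lemma ker_d0_zmod_closed (X : SObj) : zmod_closed (ker_d0 X).
Proof.
split=> [|x y /eqP x0 /eqP y0]; rewrite !inE ?rmorph0 //.
by rewrite rmorphB x0 y0 subrr.
Qed.

HB.instance Definition _ (X : SObj) :=
  GRing.isZmodClosed.Build _ (ker_d0 X) (ker_d0_zmod_closed X).

Record kerd0 (X : SObj) := KerD0 { kval :> sA1 X; kvalP : kval \in ker_d0 X }.

HB.instance Definition _ (X : SObj) := [isSub for @kval X].
HB.instance Definition _ (X : SObj) := [Choice of kerd0 X by <:].
HB.instance Definition _ (X : SObj) :=
  [SubChoice_isSubZmodule of kerd0 X by <:].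

Section KernelModule.
Variable X : SObj.
Implicit Types (a b : sA0 X) (u v : kerd0 X).

Lemma ker_d0_mul_s a (x : sA1 X) : x \in ker_d0 X -> ss X a * x \in ker_d0 X.
Proof. by rewrite !inE rmorphM => /eqP ->; rewrite mulr0. Qed.

Definition kerd0_scale a u : kerd0 X := KerD0 (ker_d0_mul_s a (kvalP u)).

Lemma kerd0_scaleA a b u : kerd0_scale a (kerd0_scale b u) = kerd0_scale (a * b) u.
Proof. by apply: val_inj; rewrite /= rmorphM mulrA. Qed.

Lemma kerd0_scale1 : left_id 1 kerd0_scale.
Proof. by move=> u; apply: val_inj; rewrite /= rmorph1 mul1r. Qed.

Lemma kerd0_scaleDr : right_distributive kerd0_scale +%R.
Proof. by move=> a u v; apply: val_inj; rewrite /= mulrDr. Qed.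

Lemma kerd0_scaleDl u : {morph kerd0_scale^~ u : a b / a + b}.
Proof. by move=> a b; apply: val_inj; rewrite /= rmorphD mulrDl. Qed.

End KernelModule.

HB.instance Definition _ (X : SObj) :=
  GRing.Zmodule_isLmodule.Build (sA0 X) (kerd0 X)
    (@kerd0_scaleA X) (@kerd0_scale1 X) (@kerd0_scaleDr X) (@kerd0_scaleDl X).

Lemma kerd0_valZ X (a : sA0 X) (u : kerd0 X) : val (a *: u) = ss X a * val u.
Proof. by []. Qed.

Lemma mul_ker_d0 X (x y : sA1 X) : x \in ker_d0 X -> y * x = ss X (sd1 X y) * x.
Proof.
move=> /eqP x0; apply/eqP; rewrite -subr_eq0 -mulrBl mulrC; apply/eqP.
by apply: sgood => //; rewrite rmorphB sd1s subrr.
Qed.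

Definition kerd0_d1 X (u : kerd0 X) : sA0 X := sd1 X (val u).

Lemma kerd0_d1_linear X a (u v : kerd0 X) :
  kerd0_d1 (a *: u + v) = a * kerd0_d1 u + kerd0_d1 v.
Proof. by rewrite /kerd0_d1 /= rmorphD rmorphM sd1s. Qed.

Lemma kerd0_d1_sym X (u v : kerd0 X) : kerd0_d1 u *: v = kerd0_d1 v *: u.
Proof.
apply: val_inj; rewrite !kerd0_valZ /kerd0_d1.
by rewrite -(mul_ker_d0 _ (kvalP v)) -(mul_ker_d0 _ (kvalP u)) mulrC.
Qed.

Definition qideal_of_sring (X : SObj) : QObj :=
  @Build_QObj (sA0 X) (kerd0 X) (@kerd0_d1 X)
    (@kerd0_d1_linear X) (@kerd0_d1_sym X).

Section SimplicialHom.
Variables (X Y : SObj) (h : SHom X Y).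
Implicit Types (a : sA0 X) (u v : kerd0 X).

Lemma sh1_ker_d0 (x : sA1 X) : x \in ker_d0 X -> sh1 h x \in ker_d0 Y.
Proof. by rewrite !inE sh_d0 => /eqP ->; rewrite rmorph0. Qed.

Definition kerd0_map (u : kerd0 X) : kerd0 Y := KerD0 (sh1_ker_d0 (kvalP u)).

Lemma kerd0_mapD u v : kerd0_map (u + v) = kerd0_map u + kerd0_map v.
Proof. by apply: val_inj; rewrite /= rmorphD. Qed.

Lemma kerd0_mapZ a u : kerd0_map (a *: u) = sh0 h a *: kerd0_map u.
Proof. by apply: val_inj; rewrite /= rmorphM sh_s. Qed.

Lemma kerd0_map_d1 u : kerd0_d1 (kerd0_map u) = sh0 h (kerd0_d1 u).
Proof. exact: sh_d1. Qed.

Definition qideal_of_sring_hom : QHom (qideal_of_sring X) (qideal_of_sring Y) :=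
  @Build_QHom (qideal_of_sring X) (qideal_of_sring Y) (sh0 h) kerd0_map
    kerd0_mapD kerd0_mapZ kerd0_map_d1.

End SimplicialHom.

Definition qideal_of_sring_functor : Functor SCat QCat.
Proof.
refine (@Build_Functor SCat QCat qideal_of_sring qideal_of_sring_hom _ _ _).
- by move=> X Y f g [e1 e2]; split=> // u; apply: val_inj; rewrite /= e2.
- by move=> X; split=> // u; apply: val_inj.
- by move=> X Y Z g f; split=> // u; apply: val_inj.
Defined.

Section QuasiIdealUnit.
Variable X : QObj.
Local Notation GFX := (qideal_of_sring (sring_of_qideal X)).

Lemma qext_ker_d0 (x : qI X) :
  ((0, x) : qext X) \in ker_d0 (sring_of_qideal X).
Proof. by rewrite inE. Qed.

Definition qext_embed (x : qI X) : kerd0 (sring_of_qideal X) :=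
  KerD0 (qext_ker_d0 x).

Lemma qext_embedD x y : qext_embed (x + y) = qext_embed x + qext_embed y.
Proof. by apply: val_inj; congr (_, _); rewrite /= addr0. Qed.

Lemma qext_embedZ (c : sA0 (sring_of_qideal X)) x :
  qext_embed (c *: x) = idfun c *: qext_embed x.
Proof.
apply: val_inj; congr (_, _); first by rewrite /= mulr0.
by rewrite /= scaler0 raddf0 scale0r !addr0.
Qed.

Lemma qext_embed_d1 x : kerd0_d1 (qext_embed x) = idfun (qd X x).
Proof. exact: add0r. Qed.

Definition qideal_unit : QHom X GFX :=
  @Build_QHom X GFX idfun qext_embed qext_embedD qext_embedZ qext_embed_d1.

Lemma kerd0_qext_fst (k : kerd0 (sring_of_qideal X)) : (val k).1 = 0.
Proof. exact: eqP (kvalP k). Qed.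

Lemma kerd0_snd_semilin c (k : kerd0 (sring_of_qideal X)) :
  (val (c *: k)).2 = idfun c *: (val k).2.
Proof. by rewrite /= scaler0 raddf0 scale0r !addr0. Qed.

Lemma kerd0_snd_d (k : kerd0 (sring_of_qideal X)) :
  qd X (val k).2 = idfun (kerd0_d1 k).
Proof. by rewrite /= /kerd0_d1 /= /qext_d1 kerd0_qext_fst add0r. Qed.

Definition qideal_unit_inv : QHom GFX X :=
  @Build_QHom GFX X idfun (fun k => (val k).2) (fun _ _ => erefl)
    kerd0_snd_semilin kerd0_snd_d.

End QuasiIdealUnit.

Lemma qideal_unit_nat_iso :
  @nat_iso QCat QCat (fun X => X) (fun X => qideal_of_sring (sring_of_qideal X))
    (fun _ _ f => f) (fun _ _ f => qideal_of_sring_hom (sring_of_qideal_hom f)).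
Proof.
exists qideal_unit, qideal_unit_inv; split; [|split].
- by move=> X; split.
- move=> X; split=> // k; apply: val_inj.
  by case: k => -[c x] /= /eqP /= ->.
- move=> X Y f; split=> // x; apply: val_inj.
  by rewrite /= /qext_map /= rmorph0.
Qed.

Section SimplicialSplitting.
Variable X : SObj.
Implicit Types (u : qext (qideal_of_sring X)) (y : sA1 X).

Definition a1_of_qext u : sA1 X := ss X u.1 + val u.2.

Lemma s_d0_ker y : y - ss X (sd0 X y) \in ker_d0 X.
Proof. by rewrite inE rmorphB sd0s subrr. Qed.

Definition qext_of_a1 y : qext (qideal_of_sring X) :=
  (sd0 X y, KerD0 (s_d0_ker y)).

Lemma a1_of_qextK : cancel a1_of_qext qext_of_a1.
Proof.
move=> [c k]; have d0_ck : sd0 X (ss X c + val k) = c.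
  by rewrite rmorphD sd0s (eqP (kvalP k)) addr0.
congr (_, _); first exact: d0_ck.
by apply: val_inj; rewrite /= d0_ck addrC addKr.
Qed.

Lemma qext_of_a1K : cancel qext_of_a1 a1_of_qext.
Proof. by move=> y; rewrite /a1_of_qext /= addrC subrK. Qed.

Lemma a1_of_qext_is_zmod_morphism : zmod_morphism a1_of_qext.
Proof. by move=> [c k] [c' k']; rewrite /a1_of_qext /= rmorphB addrACA opprD. Qed.

Lemma a1_of_qext_is_monoid_morphism : monoid_morphism a1_of_qext.
Proof.
split=> [|[c k] [c' k']]; first by rewrite /a1_of_qext /= rmorph1 addr0.
rewrite /a1_of_qext /= /kerd0_d1 rmorphM mulrDl !mulrDr.
by rewrite (mul_ker_d0 (val k) (kvalP k')) [val k * _]mulrC !addrA.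
Qed.

End SimplicialSplitting.

HB.instance Definition _ X := GRing.isZmodMorphism.Build _ _ (@a1_of_qext X)
  (@a1_of_qext_is_zmod_morphism X).
HB.instance Definition _ X := GRing.isMonoidMorphism.Build _ _ (@a1_of_qext X)
  (@a1_of_qext_is_monoid_morphism X).
HB.instance Definition _ X := GRing.isZmodMorphism.Build _ _ (@qext_of_a1 X)
  (can2_zmod_morphism (@a1_of_qextK X) (@qext_of_a1K X)).
HB.instance Definition _ X := GRing.isMonoidMorphism.Build _ _ (@qext_of_a1 X)
  (can2_monoid_morphism (@a1_of_qextK X) (@qext_of_a1K X)).

Section SimplicialCounitHom.
Variable X : SObj.
Local Notation FGX := (sring_of_qideal (qideal_of_sring X)).
Implicit Types (u : qext (qideal_of_sring X)) (y : sA1 X) (c : sA0 X).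

Lemma a1_of_qext_d0 u : sd0 X (a1_of_qext u) = idfun (qext_d0 u).
Proof. by case: u => c k; rewrite rmorphD sd0s (eqP (kvalP k)) addr0. Qed.

Lemma a1_of_qext_d1 u : sd1 X (a1_of_qext u) = idfun (qext_d1 u).
Proof. by rewrite rmorphD sd1s. Qed.

Lemma a1_of_qext_s c :
  ss X (idfun c) = a1_of_qext (@qext_s (qideal_of_sring X) c).
Proof. by rewrite /a1_of_qext addr0. Qed.

Definition sring_counit : SHom FGX X :=
  @Build_SHom FGX X idfun (GRing.RMorphism.clone _ _ (@a1_of_qext X) _)
    a1_of_qext_d0 a1_of_qext_d1 a1_of_qext_s.

Lemma qext_of_a1_d1 y : qext_d1 (qext_of_a1 y) = idfun (sd1 X y).
Proof. by rewrite /qext_d1 /= /kerd0_d1 /= rmorphB sd1s addrC subrK. Qed.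

Lemma qext_of_a1_s c :
  @qext_s (qideal_of_sring X) (idfun c) = qext_of_a1 (ss X c).
Proof.
by apply: (can_inj (@a1_of_qextK X)); rewrite qext_of_a1K -a1_of_qext_s.
Qed.

Definition sring_counit_inv : SHom X FGX :=
  @Build_SHom X FGX idfun (GRing.RMorphism.clone _ _ (@qext_of_a1 X) _)
    (fun _ => erefl) qext_of_a1_d1 qext_of_a1_s.

End SimplicialCounitHom.

Lemma sring_counit_nat_iso :
  @nat_iso SCat SCat (fun X => sring_of_qideal (qideal_of_sring X)) (fun X => X)
    (fun _ _ f => sring_of_qideal_hom (qideal_of_sring_hom f)) (fun _ _ f => f).
Proof.
exists sring_counit, sring_counit_inv; split; [|split].
- by move=> X; split=> //= u; rewrite a1_of_qextK.
- by move=> X; split=> //= y; rewrite qext_of_a1K.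
- move=> X Y f; split=> //= -[c k].
  by rewrite /a1_of_qext /= rmorphD sh_s.
Qed.

Theorem lemma3p3p6 : cat_equiv QCat SCat.
Proof.
exists sring_of_qideal_functor, qideal_of_sring_functor.
exact: (conj qideal_unit_nat_iso sring_counit_nat_iso).
Qed.
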